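(* Assume $\mathbf a,\mathbf b\in\Delta^n$ with strictly positive entries. Then the problem $\min_{X\in\mathbb{R}^{n\times n}_+}f(X)$ admits an optimal solution $X_f$ such that $$\|X_f\mathbf 1_n-\mathbf a\|_1+\|X_f^\top\mathbf 1_n-\mathbf b\|_1\le\frac{2n\|C\|_\infty}{\tau}.$$
   Context: Let $n\ge1$, $C\in\mathbb{R}^{n\times n}$ with nonnegative entries and $\|C\|_\infty=\max_{i,j}|C_{ij}|$; $\tau>0$; $\Delta^n=\{\mathbf x\in\mathbb{R}^n_+:\sum_i x_i=1\}$. For $\mathbf x\in\mathbb{R}^n_+$ and $\mathbf y$ with positive entries, $\mathbf{KL}(\mathbf x\|\mathbf y)=\sum_i x_i\log(x_i/y_i)-x_i+y_i$ (with $0\log0=0$). $\mathbf 1_n$ is the all-ones vector. $f(X)=\langle C,X\rangle+\tau\mathbf{KL}(X\mathbf 1_n\|\mathbf a)+\tau\mathbf{KL}(X^\top\mathbf 1_n\|\mathbf b)$ for $X\in\mathbb{R}^{n\times n}_+$. *)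

From mathcomp Require Import all_boot all_order all_algebra.
From mathcomp Require Import all_classical all_reals all_analysis.
Set Implicit Arguments. Unset Strict Implicit. Unset Printing Implicit Defensive.
Import Order.TTheory GRing.Theory Num.Theory.
Local Open Scope ring_scope.

(* With mathcomp-analysis' ln, ln 0 = 0, so the term x_i * ln(x_i/y_i) is 0
   when x_i = 0, matching the convention 0 log 0 = 0. *)
Definition KL (R : realType) (n : nat) (x y : 'I_n -> R) : R :=
  \sum_(i < n) (x i * ln (x i / y i) - x i + y i).

Definition rowsum (R : realType) (n : nat) (X : 'M[R]_n) : 'I_n -> R :=
  fun i => \sum_(j < n) X i j.
Definition colsum (R : realType) (n : nat) (X : 'M[R]_n) : 'I_n -> R :=
  fun j => \sum_(i < n) X i j.

Definition nonneg_mx (R : realType) (n : nat) (X : 'M[R]_n) : Prop :=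
  forall i j, 0 <= X i j.

Definition frob (R : realType) (n : nat) (C X : 'M[R]_n) : R :=
  \sum_(i < n) \sum_(j < n) C i j * X i j.

Definition mx_maxabs (R : realType) (n : nat) (C : 'M[R]_n) : R :=
  \big[Num.max/0]_(i < n) \big[Num.max/0]_(j < n) `|C i j|.

Definition l1 (R : realType) (n : nat) (x : 'I_n -> R) : R :=
  \sum_(i < n) `|x i|.

Definition fobj (R : realType) (n : nat) (C : 'M[R]_n) (tau : R)
  (a b : 'I_n -> R) (X : 'M[R]_n) : R :=
  frob C X + tau * KL (rowsum X) a + tau * KL (colsum X) b.

Definition in_simplex (R : realType) (n : nat) (x : 'I_n -> R) : Prop :=
  (forall i, 0 <= x i) /\ \sum_(i < n) x i = 1.

From mathcomp Require Import all_boot all_order all_algebra.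
From mathcomp Require Import all_classical all_reals all_analysis.
From mathcomp Require Import ring lra.
Import Order.TTheory GRing.Theory Num.Theory.
Import numFieldNormedType.Exports.
Local Open Scope classical_set_scope.
Local Open Scope ring_scope.

(* The objective is continuous and coercive on the nonnegative orthant, so a
   minimizer X exists.  Comparing f(X) with f(tX) for a suitable t < 1 shows,
   via the log-sum inequality, that the total mass of X is at most 1.
   Comparing f(X) with f(X + e E_ij) for small e > 0 shows that the marginals
   r = X 1 and c = X^T 1 satisfy r_i c_j >= exp(-C_ij/tau) a_i b_j.
   Hence the smallest ratios alpha = min r_i/a_i and beta = min c_j/b_j satisfy
   alpha beta >= exp(-||C||/tau), so alpha + beta >= 2 - ||C||/tau by AM-GM.
   Finally r >= alpha a and r has mass at most 1, so |r - a|_1 <= 2(1 - alpha),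
   and likewise |c - b|_1 <= 2(1 - beta). *)

Section kl_term.
Context {R : realType}.
Implicit Types c x y z : R.

Lemma ln_le_subr1 z : 0 < z -> ln z <= z - 1.
Proof. by move=> z0; have := @le_ln1Dx R (z - 1); rewrite addrCA subrr addr0; apply; lra. Qed.

Lemma mulr_ln_div_le {x y} : 0 < x -> 0 < y -> x * ln (y / x) <= y - x.
Proof.
move=> x0 y0; have -> : y - x = x * (y / x - 1) by field; rewrite lt0r_neq0.
by rewrite ler_pM2l // ln_le_subr1 // divr_gt0.
Qed.

Definition kl_term c x := x * ln (x / c) - x + c.

Lemma kl_term0 c : kl_term c 0 = c.
Proof. by rewrite /kl_term mul0r subr0 add0r. Qed.

Lemma kl_term_ge0 c x : 0 < c -> 0 <= x -> 0 <= kl_term c x.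
Proof.
move=> c0; rewrite le0r => /predU1P[->|x0]; first by rewrite kl_term0 ltW.
have := mulr_ln_div_le x0 c0.
rewrite -[c / x]invf_div lnV ?posrE ?divr_gt0 // /kl_term; lra.
Qed.

Lemma kl_termB_le {c x y} : 0 < c -> 0 <= x -> 0 < y ->
  kl_term c y - kl_term c x <= (y - x) * ln (y / c).
Proof.
move=> c0; rewrite le0r => /predU1P[->|x0] y0; rewrite /kl_term.
  by rewrite mul0r !subr0; lra.
have -> : ln (y / c) = ln (y / x) + ln (x / c).
  by rewrite -lnM ?posrE ?divr_gt0 // mulrA divfK // gt_eqF.
have := mulr_ln_div_le x0 y0; lra.
Qed.

Lemma kl_term_scale_le c x t : 0 < c -> 0 <= x -> 0 < t ->
  kl_term c (t * x) - kl_term c x <= (t - 1) * (x * ln (t * x / c)).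
Proof.
move=> c0; rewrite le0r => /predU1P[->|x0] t0.
  by rewrite !(mulr0, mul0r) subrr.
have := kl_termB_le c0 (ltW x0) (mulr_gt0 t0 x0).
have -> : t * x - x = (t - 1) * x by ring.
by rewrite mulrA.
Qed.

Lemma kl_term_gt2 c x : 0 < c <= 1 -> expR 3 < x -> 2 < kl_term c x.
Proof.
case/andP=> c0 c1 x3; have e4 : 4 <= expR 3 :> R by have := expR_ge1Dx (3 : R); lra.
have x0 : 0 < x by lra.
have : 3 < ln (x / c).
  rewrite -(expRK 3) ltr_ln ?posrE ?expR_gt0 ?divr_gt0 //.
  by apply: lt_le_trans x3 _; rewrite ler_pdivlMr // ger_pMr.
rewrite /kl_term; nra.
Qed.

Lemma sqr_mulr_ln_le y : 0 < y <= 1 -> (y * ln y) ^+ 2 <= 2 * y.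
Proof.
case/andP=> y0 y1; have L0 : 0 <= - ln y by rewrite oppr_ge0 ln_le0.
have := expR_ge1Dxn 1 L0; rewrite expRN lnK ?posrE // sqrrN.
rewrite (_ : 2`!%:R = 2 :> R) // => h.
have : y ^+ 2 * (1 + ln y ^+ 2 / 2) <= y ^+ 2 * y^-1 by rewrite ler_pM2l ?exprn_gt0.
rewrite expr2 mulfK ?gt_eqF // exprMn.
have : 0 <= y ^+ 2 by rewrite sqr_ge0.
nra.
Qed.

Lemma continuous_mulr_ln : continuous (fun x : R => x * ln x).
Proof.
move=> x; have [xn|x0|->] := ltgtP x 0.
- apply: (cvg_near_cst (x * ln x)).
  have := @near_in_itvNyo R 0 x; rewrite in_itv /= => /(_ xn).
  by apply: filterS => y; rewrite in_itv /= => yn; rewrite !ln0 ?mulr0 // ltW.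
- by apply: continuousM; [exact: cvg_id | exact: continuous_ln].
- apply/cvgrPdist_le => e e0; rewrite mul0r.
  have d0 : 0 < Num.min 1 (e ^+ 2 / 2) by rewrite lt_min ltr01 divr_gt0 ?exprn_gt0.
  suff small : forall y : R, `|y| < Num.min 1 (e ^+ 2 / 2) -> `|0 - y * ln y| <= e.
    exact: filterS small (nbhs0_lt d0).
  move=> y; rewrite lt_min sub0r normrN => /andP[y1 ye].
  have [yn|yp] := leP y 0; first by rewrite ln0 // mulr0 normr0 ltW.
  rewrite gtr0_norm // in y1 ye.
  have sq : (y * ln y) ^+ 2 <= 2 * y by apply: sqr_mulr_ln_le; rewrite yp ltW.
  rewrite ler_norml; apply/andP; split; nra.
Qed.

Lemma continuous_kl_term c : 0 < c -> continuous (kl_term c).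
Proof.
move=> c0; have -> : kl_term c = (fun x => c * ((x / c) * ln (x / c)) - x + c).
  by apply/funext => x; rewrite /kl_term mulrA (mulrC c) divfK ?gt_eqF.
move=> x; apply: cvgD; last exact: cvg_cst.
apply: cvgB; last exact: cvg_id.
apply: cvgMl_tmp; apply: (@continuous_comp _ _ _ (fun x => x / c) (fun z => z * ln z)).
  by apply: cvgMr_tmp; exact: cvg_id.
exact: continuous_mulr_ln.
Qed.

Lemma log_sum_ge (I : finType) (x y : I -> R) :
  (forall i, 0 <= x i) -> (forall i, 0 < y i) -> 0 < \sum_i x i ->
  (\sum_i x i) * ln ((\sum_i x i) / \sum_i y i) <= \sum_i x i * ln (x i / y i).
Proof.
move=> x0 y0; set m := \sum_i x i; set s := \sum_i y i => m0.
have s0 : 0 < s.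
  case: (pickP (fun _ : I => true)) => [i _|I0]; last by rewrite /m big_pred0 ?ltxx in m0.
  by apply: lt_le_trans (y0 i) _; rewrite /s (bigD1 i) //= lerDl sumr_ge0 // => k _; exact: ltW.
have term i : x i * ln (m / s) + x i - m * y i / s <= x i * ln (x i / y i).
  have my0 : 0 < m * y i / s by rewrite divr_gt0 ?mulr_gt0.
  have [->|xi0] := eqVneq (x i) 0; first by rewrite !mul0r !add0r oppr_le0 ltW.
  have xi : 0 < x i by rewrite lt0r xi0 x0.
  have := mulr_ln_div_le xi my0.
  have -> : ln (m * y i / s / x i) = ln (m / s) - ln (x i / y i).
    rewrite -ln_div ?posrE ?divr_gt0 //; congr ln; field.
    by rewrite !gt_eqF.
  lra.
apply: le_trans (ler_sum _ (fun i _ => term i)).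
rewrite !big_split /= -!mulr_suml -/m sumrN -mulr_suml -mulr_sumr -/s.
by rewrite mulfK ?gt_eqF // addrK.
Qed.

End kl_term.

Section marginals.
Context {R : realType} {n : nat}.
Implicit Types (X Y C : 'M[R]_n) (x c : 'I_n -> R) (t : R) (i j k : 'I_n).

Lemma rowsumD X Y i : rowsum (X + Y) i = rowsum X i + rowsum Y i.
Proof. by rewrite /rowsum -big_split; apply: eq_bigr => j _; rewrite mxE. Qed.

Lemma rowsumZ t X : rowsum (t *: X) = (fun i => t * rowsum X i).
Proof. by apply/funext => i; rewrite /rowsum mulr_sumr; apply: eq_bigr => j _; rewrite mxE. Qed.

Lemma rowsum_delta i j k : rowsum (delta_mx i j) k = (k == i)%:R :> R.
Proof.
rewrite /rowsum (bigD1 j) //= mxE eqxx andbT big1 ?addr0 // => l /negbTE lj.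
by rewrite mxE lj andbF.
Qed.

Lemma colsumD X Y j : colsum (X + Y) j = colsum X j + colsum Y j.
Proof. by rewrite /colsum -big_split; apply: eq_bigr => i _; rewrite mxE. Qed.

Lemma colsumZ t X : colsum (t *: X) = (fun j => t * colsum X j).
Proof. by apply/funext => j; rewrite /colsum mulr_sumr; apply: eq_bigr => i _; rewrite mxE. Qed.

Lemma colsum_delta i j k : colsum (delta_mx i j) k = (k == j)%:R :> R.
Proof.
rewrite /colsum (bigD1 i) //= mxE eqxx /= big1 ?addr0 // => l /negbTE li.
by rewrite mxE li.
Qed.

Lemma rowsum_ge0 X i : nonneg_mx X -> 0 <= rowsum X i.
Proof. by move=> X0; apply: sumr_ge0. Qed.

Lemma colsum_ge0 X j : nonneg_mx X -> 0 <= colsum X j.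
Proof. by move=> X0; apply: sumr_ge0. Qed.

Lemma sum_colsum X : \sum_j colsum X j = \sum_i rowsum X i.
Proof. exact: exchange_big. Qed.

Lemma frobD C X Y : frob C (X + Y) = frob C X + frob C Y.
Proof.
rewrite /frob -big_split; apply: eq_bigr => i _.
by rewrite -big_split; apply: eq_bigr => j _; rewrite mxE mulrDr.
Qed.

Lemma frobZ C t X : frob C (t *: X) = t * frob C X.
Proof.
rewrite /frob mulr_sumr; apply: eq_bigr => i _.
by rewrite mulr_sumr; apply: eq_bigr => j _; rewrite mxE mulrCA.
Qed.

Lemma frob_delta C i j : frob C (delta_mx i j) = C i j.
Proof.
rewrite /frob (bigD1 i) //= [X in _ + X]big1 => [|k /negbTE ki]; last first.
  by rewrite big1 // => l _; rewrite mxE ki mulr0.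
rewrite addr0 (bigD1 j) //= mxE !eqxx mulr1 big1 ?addr0 // => l /negbTE lj.
by rewrite mxE lj andbF mulr0.
Qed.

Lemma frob_ge0 {C X} : nonneg_mx C -> nonneg_mx X -> 0 <= frob C X.
Proof. by move=> C0 X0; do 2![apply: sumr_ge0 => ? _]; rewrite mulr_ge0. Qed.

Lemma kl_term_le_KL {x c} i : (forall k, 0 <= x k) -> (forall k, 0 < c k) ->
  kl_term (c i) (x i) <= KL x c.
Proof.
move=> x0 c0; rewrite /KL (bigD1 i) //= lerDl.
by apply: sumr_ge0 => k _; exact: kl_term_ge0.
Qed.

Lemma KL_ge0 {x c} : (forall k, 0 <= x k) -> (forall k, 0 < c k) -> 0 <= KL x c.
Proof. by move=> x0 c0; apply: sumr_ge0 => k _; exact: kl_term_ge0. Qed.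

Lemma KL_update {x y c} i : (forall k, k != i -> y k = x k) ->
  KL y c - KL x c = kl_term (c i) (y i) - kl_term (c i) (x i).
Proof.
move=> yx; rewrite /KL -sumrB (bigD1 i) //= big1 ?addr0 // => k /yx ->.
by rewrite subrr.
Qed.

Lemma KL_scale_le {x c t} :
  (forall i, 0 <= x i) -> (forall i, 0 < c i) -> \sum_i c i = 1 ->
  0 < \sum_i x i -> 0 < t <= 1 ->
  KL (fun i => t * x i) c - KL x c <= (t - 1) * ((\sum_i x i) * ln (t * \sum_i x i)).
Proof.
move=> x0 c0 c1 m0 /andP[t0 t1].
set S := \sum_i x i * ln (t * x i / c i).
have tx0 i : 0 <= t * x i by rewrite mulr_ge0 // ltW.
have : (\sum_i t * x i) * ln ((\sum_i t * x i) / \sum_i c i) <= t * S.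
  rewrite /S mulr_sumr; under [X in _ <= X]eq_bigr do rewrite mulrA.
  by apply: log_sum_ge => //; rewrite -mulr_sumr mulr_gt0.
rewrite -mulr_sumr c1 divr1 -mulrA ler_pM2l // => logsum.
apply: le_trans (_ : (t - 1) * S <= _); last by rewrite ler_wnM2l // subr_le0.
rewrite /KL -sumrB /S mulr_sumr; apply: ler_sum => i _.
exact: kl_term_scale_le.
Qed.

Lemma l1_sub_le_ratio {x c i} :
  (forall k, 0 < c k) -> \sum_k c k = 1 -> \sum_k x k <= 1 ->
  (forall k, x i / c i <= x k / c k) ->
  l1 (fun k => x k - c k) <= 2 * (1 - x i / c i) + (\sum_k x k - 1).
Proof.
move=> c0 c1 x1 imin; set al := x i / c i.
have lb k : al * c k <= x k by rewrite -ler_pdivlMr.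
have al1 : al <= 1.
  apply: le_trans x1; rewrite -[al]mulr1 -c1 mulr_sumr; exact: ler_sum.
have -> : 2 * (1 - al) + (\sum_k x k - 1) = \sum_k (2 * (1 - al) * c k + (x k - c k)).
  by rewrite big_split sumrB -mulr_sumr c1 mulr1.
apply: ler_sum => k _; have := lb k; have := c0 k.
by rewrite ler_norml => ck lbk; apply/andP; split; nra.
Qed.

Lemma mx_maxabs_ge0 C : 0 <= mx_maxabs C.
Proof. by apply/bigmax_geP; left. Qed.

Lemma ler_mx_maxabs C i j : C i j <= mx_maxabs C.
Proof.
apply: le_trans (ler_norm _) _.
by apply/bigmax_geP; right; exists i => //; apply/bigmax_geP; right; exists j.
Qed.

End marginals.

(* Compactness of boxes is only available for row vectors, hence [vec_mx]. *)
Lemma nonneg_mx_argmin (R : realType) n (F : 'M[R]_n -> R) (M : R) : 0 <= M ->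
  continuous (fun v : 'rV[R]_(n * n) => F (vec_mx v)) ->
  (forall Y i j, nonneg_mx Y -> M < Y i j -> F 0 <= F Y) ->
  exists X, nonneg_mx X /\ forall Y, nonneg_mx Y -> F X <= F Y.
Proof.
move=> M0 Fc Fbig.
pose K := [set v : 'rV[R]_(n * n) | forall k, `[0, M]%classic (v ord0 k)].
have Kc : compact K.
  by apply: (@rV_compact _ _ (fun=> `[0, M]%classic)) => _; exact: segment_compact.
have K0 : K 0 by move=> k; rewrite /= mxE in_itv /= lexx.
have [c /[1!inE] cK cmin] := compact_EVT_min (ex_intro _ 0 K0) Kc (continuous_subspaceT Fc).
have cmin0 : F (vec_mx c) <= F 0 by rewrite -(linear0 (@vec_mx R n n)); apply: cmin; rewrite inE.
exists (vec_mx c); split.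
  by move=> i j; rewrite mxE; have /andP[] := cK (mxvec_index i j).
move=> Y Y0; case: (boolP [forall i, forall j, Y i j <= M]) => [/forallP YM|].
  rewrite -[Y]mxvecK; apply: cmin; rewrite inE => k /=.
  case/mxvec_indexP: k => i j; rewrite mxvecE in_itv /= Y0.
  exact: (forallP (YM i)).
case/forallPn => i /forallPn [j]; rewrite -ltNge => Yij.
exact: le_trans cmin0 (Fbig Y i j Y0 Yij).
Qed.

Lemma continuous_sumr {R : realType} {I : finType} {T : topologicalType}
    (F : I -> T -> R) :
  (forall i, continuous (F i)) -> continuous (fun v => \sum_i F i v).
Proof.
by move=> Fc; apply: (@continuous_big R _ _ _ xpredT add_continuous) => i _; exact: Fc.
Qed.

Lemma exists_shift_mul_lt {R : realFieldType} {r c p : R} : 0 <= r -> 0 <= c ->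
  r * c < p -> exists2 e, 0 < e & (r + e) * (c + e) < p.
Proof.
move=> r0 c0 rcp; set d := p - r * c; set s := r + c + 1.
have d0 : 0 < d by rewrite subr_gt0.
have s0 : 0 < s by rewrite /s; lra.
exists (Num.min 1 (d / (2 * s))); first by rewrite lt_min ltr01 divr_gt0 ?mulr_gt0.
set e := Num.min 1 _; have e1 : e <= 1 by rewrite ge_min lexx.
have e0 : 0 < e by rewrite lt_min ltr01 divr_gt0 ?mulr_gt0.
have es : e * s <= d / 2.
  have : e <= d / (2 * s) by rewrite ge_min lexx orbT.
  have -> : d / 2 = d / (2 * s) * s by field; rewrite gt_eqF.
  by rewrite ler_pM2r.
rewrite /s /d in es d0; nra.
Qed.

Lemma two_sub_le_add {R : realType} {k x y : R} : 0 <= x -> 0 <= y ->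
  expR (- k) <= x * y -> 2 - k <= x + y.
Proof.
move=> x0 y0 xy; set s := expR (- (k / 2)).
have sxy : s ^+ 2 <= ((x + y) / 2) ^+ 2.
  apply: le_trans (leif_AGM2 x y); apply: le_trans xy.
  by rewrite -expRM_natr ler_expR; lra.
have := expR_ge1Dx (- (k / 2)); rewrite -/s.
move: sxy; rewrite ler_sqr ?nnegrE ?divr_ge0 ?addr_ge0 ?expR_ge0 //; lra.
Qed.

Section optimality.
Context {R : realType} {n : nat} {C : 'M[R]_n} {tau : R} {a b : 'I_n -> R}.
Hypotheses (C_ge0 : nonneg_mx C) (tau_gt0 : 0 < tau).
Hypotheses (a_gt0 : forall i, 0 < a i) (b_gt0 : forall j, 0 < b j).
Hypotheses (a_sum1 : \sum_i a i = 1) (b_sum1 : \sum_j b j = 1).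

Local Notation f := (fobj C tau a b).

Lemma fobj0 : f 0 = 2 * tau.
Proof.
have KL0 (c : 'I_n -> R) : KL (fun=> 0) c = \sum_i c i.
  by apply: eq_bigr => i _; exact: kl_term0.
have row0 : rowsum (0 : 'M[R]_n) = fun=> 0.
  by apply/funext => i; apply: big1 => j _; rewrite mxE.
have col0 : colsum (0 : 'M[R]_n) = fun=> 0.
  by apply/funext => j; apply: big1 => i _; rewrite mxE.
have frob0 : frob C 0 = 0 by rewrite -(scale0r 0) frobZ mul0r.
by rewrite /fobj frob0 row0 col0 !KL0 a_sum1 b_sum1; ring.
Qed.

Lemma fobj_ge_kl_term Y i : nonneg_mx Y -> tau * kl_term (a i) (rowsum Y i) <= f Y.
Proof.
move=> Y0; rewrite /fobj -addrA ler_wpDl ?frob_ge0 // ler_wpDr //.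
  by apply: mulr_ge0; [exact: ltW | apply: KL_ge0 => // j; exact: colsum_ge0].
by rewrite ler_pM2l // kl_term_le_KL // => k; exact: rowsum_ge0.
Qed.

Lemma continuous_fobj : continuous (fun v : 'rV[R]_(n * n) => f (vec_mx v)).
Proof.
have entry i j : continuous (fun v : 'rV[R]_(n * n) => vec_mx v i j).
  have -> : (fun v : 'rV[R]_(n * n) => vec_mx v i j) = fun v => v 0 (mxvec_index i j).
    by apply/funext => v; rewrite mxE.
  exact: coord_continuous.
have scale (c : R) (F : 'rV[R]_(n * n) -> R) : continuous F -> continuous (fun v => c * F v).
  by move=> Fc v; apply: continuousM; [exact: cst_continuous | exact: Fc].
have kl (c : R) (F : 'rV[R]_(n * n) -> R) : 0 < c -> continuous F ->
    continuous (fun v => kl_term c (F v)).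
  by move=> c0 Fc v; apply: continuous_comp; [exact: Fc | exact: continuous_kl_term].
have add (F G : 'rV[R]_(n * n) -> R) : continuous F -> continuous G ->
    continuous (fun v => F v + G v).
  by move=> Fc Gc v; exact: cvgD (Fc v) (Gc v).
have frobc : continuous (fun v : 'rV[R]_(n * n) => frob C (vec_mx v)).
  by apply: continuous_sumr => i; apply: continuous_sumr => j; exact: scale.
have rowc : continuous (fun v : 'rV[R]_(n * n) => tau * KL (rowsum (vec_mx v)) a).
  apply: scale; apply: continuous_sumr => i; apply: kl => //.
  by apply: continuous_sumr => j.
have colc : continuous (fun v : 'rV[R]_(n * n) => tau * KL (colsum (vec_mx v)) b).
  apply: scale; apply: continuous_sumr => j; apply: kl => //.
  by apply: continuous_sumr => i.
exact: add _ _ (add _ _ frobc rowc) colc.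
Qed.

Lemma exists_fobj_min : exists X, nonneg_mx X /\ forall Y, nonneg_mx Y -> f X <= f Y.
Proof.
apply: (@nonneg_mx_argmin _ _ _ (expR 3)); first exact/ltW/expR_gt0.
  exact: continuous_fobj.
move=> Y i j Y0 Yij; rewrite fobj0.
have ai1 : a i <= 1.
  by rewrite -a_sum1 (bigD1 i) //= lerDl sumr_ge0 // => k _; exact: ltW.
have rowY : expR 3 < rowsum Y i.
  by apply: lt_le_trans Yij _; rewrite /rowsum (bigD1 j) //= lerDl sumr_ge0.
apply: le_trans (fobj_ge_kl_term Y i Y0); rewrite mulrC ler_pM2l //.
by apply/ltW/kl_term_gt2; rewrite ?a_gt0.
Qed.

Lemma fobj_bump_le X i j e : nonneg_mx X -> 0 < e ->
  f (X + e *: delta_mx i j) - f X <=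
    e * (C i j + tau * ln ((rowsum X i + e) * (colsum X j + e) / (a i * b j))).
Proof.
move=> X0 e0; set Y := X + e *: delta_mx i j.
set r := rowsum X i; set c := colsum X j.
have rowY k : rowsum Y k = rowsum X k + e * (k == i)%:R.
  by rewrite rowsumD rowsumZ rowsum_delta.
have colY k : colsum Y k = colsum X k + e * (k == j)%:R.
  by rewrite colsumD colsumZ colsum_delta.
have re0 : 0 < r + e by rewrite ltr_wpDl // rowsum_ge0.
have ce0 : 0 < c + e by rewrite ltr_wpDl // colsum_ge0.
have dR : KL (rowsum Y) a - KL (rowsum X) a <= e * ln ((r + e) / a i).
  rewrite (KL_update i) => [|k /negbTE ki]; last by rewrite rowY ki mulr0 addr0.
  rewrite rowY eqxx mulr1; apply: le_trans (kl_termB_le (a_gt0 i) (rowsum_ge0 X i X0) re0) _.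
  by rewrite addrAC subrr add0r.
have dC : KL (colsum Y) b - KL (colsum X) b <= e * ln ((c + e) / b j).
  rewrite (KL_update j) => [|k /negbTE kj]; last by rewrite colY kj mulr0 addr0.
  rewrite colY eqxx mulr1; apply: le_trans (kl_termB_le (b_gt0 j) (colsum_ge0 X j X0) ce0) _.
  by rewrite addrAC subrr add0r.
have -> : ln ((r + e) * (c + e) / (a i * b j)) = ln ((r + e) / a i) + ln ((c + e) / b j).
  by rewrite -lnM ?posrE ?divr_gt0 //; congr ln; field; rewrite !gt_eqF.
have := ler_wpM2l (ltW tau_gt0) dR; have := ler_wpM2l (ltW tau_gt0) dC.
rewrite /fobj frobD frobZ frob_delta !mulrBr; lra.
Qed.

Section minimizer.
Context {X : 'M[R]_n}.
Hypotheses (X_ge0 : nonneg_mx X) (X_min : forall Y, nonneg_mx Y -> f X <= f Y).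

(* If the mass m exceeded 1, scaling X by t = 2 / (m + 1) would decrease f. *)
Lemma fobj_min_mass_le1 : \sum_i rowsum X i <= 1.
Proof.
set m := \sum_i rowsum X i; rewrite leNgt; apply/negP => m1.
have m0 : 0 < m by lra.
set t := 2 / (m + 1).
have t01 : 0 < t <= 1 by rewrite divr_gt0 ?ler_pdivrMr /=; lra.
have tm1 : 1 < t * m by rewrite mulrAC ltr_pdivlMr; lra.
have tX0 : nonneg_mx (t *: X) by move=> i j; rewrite mxE mulr_ge0 // ltW; case/andP: t01.
have dR := KL_scale_le (fun i => rowsum_ge0 X i X_ge0) a_gt0 a_sum1 m0 t01.
rewrite -/m in dR.
have dC := KL_scale_le (fun j => colsum_ge0 X j X_ge0) b_gt0 b_sum1.
rewrite sum_colsum -/m in dC; have {}dC := dC t m0 t01.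
have t1 : t < 1 by rewrite ltr_pdivrMr; lra.
have gain : tau * ((t - 1) * (m * ln (t * m))) < 0.
  by rewrite pmulr_rlt0 // nmulr_rlt0 ?subr_lt0 // mulr_gt0 // ln_gt0.
have frobZ_le : t * frob C X <= frob C X by rewrite ler_piMl ?frob_ge0 // ltW.
have := ler_wpM2l (ltW tau_gt0) dR; have := ler_wpM2l (ltW tau_gt0) dC.
have := X_min _ tX0; rewrite /fobj frobZ rowsumZ colsumZ !mulrBr; lra.
Qed.

Lemma fobj_min_marginal_ge i j :
  expR (- (C i j / tau)) * (a i * b j) <= rowsum X i * colsum X j.
Proof.
rewrite leNgt; apply/negP => lt.
have [e e0 lte] := exists_shift_mul_lt (rowsum_ge0 X i X_ge0) (colsum_ge0 X j X_ge0) lt.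
have Y0 : nonneg_mx (X + e *: delta_mx i j).
  by move=> k l; rewrite !mxE addr_ge0 ?mulr_ge0 // ltW.
have ab0 : 0 < a i * b j by rewrite mulr_gt0.
have : ln ((rowsum X i + e) * (colsum X j + e) / (a i * b j)) < - (C i j / tau).
  rewrite -[X in _ < X]expRK ltr_ln ?posrE ?expR_gt0 ?divr_gt0 ?mulr_gt0 //.
  - by rewrite ltr_pdivrMr.
  - by rewrite ltr_wpDl // rowsum_ge0.
  - by rewrite ltr_wpDl // colsum_ge0.
rewrite -(ltr_pM2l tau_gt0) mulrN mulrCA divff ?gt_eqF // mulr1 => lnlt.
have := fobj_bump_le X i j e X_ge0 e0; have := X_min _ Y0.
set L := tau * ln _ in lnlt *; nra.
Qed.

Lemma fobj_min_ratio_mul_ge i j :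
  expR (- (mx_maxabs C / tau)) <= (rowsum X i / a i) * (colsum X j / b j).
Proof.
rewrite mulf_div ler_pdivlMr ?mulr_gt0 //.
apply: le_trans (fobj_min_marginal_ge i j); rewrite ler_pM2r ?mulr_gt0 // ler_expR lerN2.
by rewrite ler_pM2r ?invr_gt0 // ler_mx_maxabs.
Qed.

End minimizer.

End optimality.

Theorem theorem2 (R : realType) (n : nat) (C : 'M[R]_n) (tau : R)
  (a b : 'I_n -> R) :
  (1 <= n)%N ->
  (forall i j, 0 <= C i j) ->
  0 < tau ->
  in_simplex a -> in_simplex b ->
  (forall i, 0 < a i) -> (forall i, 0 < b i) ->
  exists Xf : 'M[R]_n,
    nonneg_mx Xf /\
    (forall X : 'M[R]_n, nonneg_mx X -> fobj C tau a b Xf <= fobj C tau a b X) /\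
    l1 (fun i => rowsum Xf i - a i) + l1 (fun j => colsum Xf j - b j)
      <= 2%:R * n%:R * mx_maxabs C / tau.
Proof.
move=> n1 C0 tau0 [_ a1] [_ b1] a0 b0.
have [X [X0 Xmin]] := exists_fobj_min C0 tau0 a0 b0 a1 b1.
exists X; do !split=> //.
have rmass := fobj_min_mass_le1 C0 tau0 a0 b0 a1 b1 X0 Xmin.
have cmass : \sum_j colsum X j <= 1 by rewrite sum_colsum.
have [i _ imin] := arg_minP (fun i => rowsum X i / a i) (isT : xpredT (Ordinal n1)).
have [j _ jmin] := arg_minP (fun j => colsum X j / b j) (isT : xpredT (Ordinal n1)).
have := l1_sub_le_ratio a0 a1 rmass (fun k => imin k isT).
have := l1_sub_le_ratio b0 b1 cmass (fun k => jmin k isT).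
have := two_sub_le_add (divr_ge0 (rowsum_ge0 X i X0) (ltW (a0 i)))
  (divr_ge0 (colsum_ge0 X j X0) (ltW (b0 j))) (fobj_min_ratio_mul_ge tau0 a0 b0 X0 Xmin i j).
rewrite sum_colsum.
have k0 : 0 <= mx_maxabs C / tau by rewrite divr_ge0 ?mx_maxabs_ge0 // ltW.
have : mx_maxabs C / tau <= n%:R * (mx_maxabs C / tau) by rewrite ler_peMl // ler1n.
rewrite -mulrA -mulrA mulrA; lra.
Qed.
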